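(* Let $G$ and $H$ be finitely generated groups and let $f:G\to H$ be a surjective homomorphism with finite kernel. For every generating $n$-tuple $S=(g_1,\dots,g_n)$ of $G$, if $\Gamma_n(G,S)$ has exponential growth then $\Gamma_n(H,f(S))$ has exponential growth, where $f(S)=(f(g_1),\dots,f(g_n))$. In particular, if $G$ has exponential Nielsen growth, then $H$ has exponential Nielsen growth.
   Context: For a group $G$, a generating $n$-tuple is $(g_1,\dots,g_n)\in G^n$ with $G=\langle g_1,\dots,g_n\rangle$. The product replacement graph $\Gamma_n(G)$ has vertices the generating $n$-tuples, with edges from $(g_1,\dots,g_n)$ to each tuple obtained by replacing $g_j$ by $g_jg_i^{\pm1}$ or $g_i^{\pm1}g_j$, for every ordered pair $i\neq j$. For $S\in\Gamma_n(G)$, $\Gamma_n(G,S)$ is the connected component of $\Gamma_n(G)$ containing $S$ (more generally $\Gamma_{n+m}(G,S)$ is the component containing $S$ padded with $m$ identity entries). For a graph $\Gamma$ and vertex $v$, $B_\Gamma(v,r)$ is the set of vertices at path distance at most $r$ from $v$; a graph has exponential growth from $v$ if $|B_\Gamma(v,r)|\ge\alpha^r$ for some $\alpha>1$ and all sufficiently large $r$; a connected graph has exponential growth if it has exponential growth from some (equivalently every) vertex. $G$ has exponential Nielsen growth if $\Gamma_n(G,S)$ has exponential growth for some $n$ and some generating $n$-tuple $S$. *)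

From Stdlib Require Import Reals List.
From mathcomp Require Import ssreflect ssrbool eqtype ssrnat fintype.
Set Implicit Arguments.
Unset Strict Implicit.

Record Group := {
  carrier :> Type;
  gmul : carrier -> carrier -> carrier;
  gone : carrier;
  ginv : carrier -> carrier;
  gmulA : forall x y z, gmul x (gmul y z) = gmul (gmul x y) z;
  gmul1l : forall x, gmul gone x = x;
  gmul1r : forall x, gmul x gone = x;
  gmulVl : forall x, gmul (ginv x) x = gone;
  gmulVr : forall x, gmul x (ginv x) = gone
}.
Arguments gmul {g}.
Arguments gone {g}.
Arguments ginv {g}.

Definition tuple_of (G : Group) (n : nat) := 'I_n -> G.

Definition generates (G : Group) (n : nat) (T : tuple_of G n) : Prop :=
  forall P : G -> Prop,
    P gone ->
    (forall x y, P x -> P y -> P (gmul x y)) ->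
    (forall x, P x -> P (ginv x)) ->
    (forall i, P (T i)) ->
    forall x, P x.

Definition finitely_generated (G : Group) : Prop :=
  exists n (T : tuple_of G n), generates T.

Definition upd (G : Group) (n : nat) (T : tuple_of G n) (j : 'I_n) (x : G)
  : tuple_of G n := fun k => if k == j then x else T k.

Definition nielsen_move (G : Group) (n : nat) (T T' : tuple_of G n) : Prop :=
  exists (i j : 'I_n) (e : bool), i <> j /\
    let h := if e then T i else ginv (T i) in
    (T' = upd T j (gmul (T j) h) \/ T' = upd T j (gmul h (T j))).

(* edges of the product replacement graph Gamma_n(G) (vertices: generating n-tuples) *)
Definition pr_edge (G : Group) (n : nat) (T T' : tuple_of G n) : Prop :=
  generates T /\ generates T' /\ nielsen_move T T'.

Inductive within (G : Group) (n : nat) : nat -> tuple_of G n -> tuple_of G n -> Prop :=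
| within_refl : forall r v, within r v v
| within_step : forall r v u w, within r v u -> pr_edge u w -> within (S r) v w.

Definition in_ball (G : Group) (n : nat) (v : tuple_of G n) (r : nat) (w : tuple_of G n) :=
  within r v w.

Definition in_component (G : Group) (n : nat) (S w : tuple_of G n) : Prop :=
  generates S /\ exists r, within r S w.

(* |B(v,r)| >= alpha^r for some alpha > 1 and all large r
   (the ball is finite; "has at least alpha^r elements" is expressed by a
    duplicate-free list of ball elements of that length). *)
Definition exp_growth_from (G : Group) (n : nat) (v : tuple_of G n) : Prop :=
  exists alpha : R, (1 < alpha)%R /\
    exists r0 : nat, forall r : nat, (r0 <= r)%coq_nat ->
      exists l : list (tuple_of G n),
        NoDup l /\ (forall w, In w l -> in_ball v r w) /\
        (alpha ^ r <= INR (length l))%R.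

Definition component_exp_growth (G : Group) (n : nat) (S : tuple_of G n) : Prop :=
  exists v, in_component S v /\ exp_growth_from v.

Definition exp_nielsen_growth (G : Group) : Prop :=
  exists n (S : tuple_of G n), generates S /\ component_exp_growth S.

Definition is_hom (G H : Group) (f : G -> H) : Prop :=
  forall x y, f (gmul x y) = gmul (f x) (f y).

Definition finite_kernel (G H : Group) (f : G -> H) : Prop :=
  exists l : list G, forall x, f x = gone -> In x l.

From Stdlib Require Import Reals List.
From mathcomp Require Import ssreflect ssrbool eqtype ssrnat fintype.
From mathcomp Require Import seq zify.
From Stdlib Require Import Classical ClassicalDescription FunctionalExtensionality.
From Stdlib Require Import Lra Lia.

(* A surjective homomorphism f maps Nielsen moves to Nielsen moves, so the
   induced map on n-tuples sends the ball B(v, r) of Gamma_n(G) into the ball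
   B(f v, r) of Gamma_n(H).  Two tuples with the same image differ entrywise by
   kernel elements, so every fibre of this map has at most |ker f|^n elements.
   Hence |B(f v, r)| >= alpha^r / |ker f|^n >= (sqrt alpha)^r for large r. *)

(* Dividing by a constant only costs a square root in the growth rate. *)
Lemma pow_sqrt_absorbs_constant (alpha : R) (c : nat) : (1 < alpha)%R ->
  exists r0, forall (r : nat) (x : R), (r0 <= r)%coq_nat -> (0 <= x)%R ->
    (alpha ^ r <= x * INR c)%R -> (sqrt alpha ^ r <= x)%R.
Proof.
move=> alpha_gt1.
have sqrt_gt1 : (1 < sqrt alpha)%R by rewrite -sqrt_1; apply: sqrt_lt_1_alt; lra.
have [r0 hr0] := Pow_x_infinity (sqrt alpha) ltac:(rewrite Rabs_pos_eq; lra) (INR c).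
exists r0 => r x hr x_ge0 hx.
have b_pos : (0 < sqrt alpha ^ r)%R by apply: pow_lt; lra.
have c_le : (INR c <= sqrt alpha ^ r)%R.
  by have := hr0 r hr; rewrite Rabs_pos_eq; lra.
have alpha_sq : (alpha ^ r = sqrt alpha ^ r * sqrt alpha ^ r)%R.
  by rewrite -Rpow_mult_distr sqrt_sqrt //; lra.
have : (x * INR c <= x * sqrt alpha ^ r)%R by apply: Rmult_le_compat_l.
rewrite alpha_sq in hx => hxc.
apply: (Rmult_le_reg_r (sqrt alpha ^ r)) => //; lra.
Qed.

Fixpoint functions_into {A : eqType} {X : Type} (x0 : X) (l : list X) (s : list A)
  : list (A -> X) :=
  match s with
  | nil => (fun _ => x0) :: nil
  | a :: s' => flat_map (fun x => map (fun d b => if b == a then x else d b)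
                                     (functions_into x0 l s')) l
  end.

Lemma length_flat_map_map (A B C : Type) (h : A -> B -> C) (l : list A) (E : list B) :
  length (flat_map (fun x => map (h x) E) l) = (length l * length E)%coq_nat.
Proof. by elim: l => //= a l IH; rewrite length_app length_map IH. Qed.

Lemma length_functions_into {A : eqType} {X : Type} (x0 : X) l (s : list A) :
  length (functions_into x0 l s) = length l ^ size s.
Proof.
by elim: s => //= a s IH; rewrite length_flat_map_map IH expnS -multE.
Qed.

Lemma functions_into_agree {A : eqType} {X : Type} (x0 : X) l (s : list A) (c : A -> X) :
  (forall a, a \in s -> In (c a) l) ->
  exists2 d, In d (functions_into x0 l s) & forall a, a \in s -> d a = c a.
Proof.
elim: s c => [|a s IH] c hc /=; first by exists (fun _ => x0); [left|].
have [d' hd' agree'] := IH c (fun b hb => hc b (mem_behead (s := a :: s) hb)).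
exists (fun b => if b == a then c a else d' b).
- apply/in_flat_map; exists (c a); split; first by apply: hc; rewrite mem_head.
  by apply/in_map_iff; exists d'.
- move=> b; rewrite in_cons; case: eqP => [->//|_] /= hb; exact: agree'.
Qed.

Lemma In_functions_into_ord (X : Type) (x0 : X) l n (c : 'I_n -> X) :
  (forall i, In (c i) l) -> In c (functions_into x0 l (enum 'I_n)).
Proof.
move=> hc; have [d hd agree] := functions_into_agree x0 l (enum 'I_n) c (fun i _ => hc i).
suff -> : c = d by [].
by apply: functional_extensionality => i; rewrite agree ?mem_enum.
Qed.

Lemma NoDup_length_le_fibres (A B : Type) (g : A -> B) (c : nat)
    (L : list A) (L' : list B) :
  NoDup L -> (forall x, In x L -> In (g x) L') ->
  (forall y, exists F, (length F <= c)%coq_nat /\ forall x, g x = y -> In x F) ->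
  (length L <= length L' * c)%coq_nat.
Proof.
move=> ndL img fibres.
have [M [lenM coverM]] : exists M : list A,
    (length M <= length L' * c)%coq_nat /\ forall x, In (g x) L' -> In x M.
  elim: L' {img} => [|y L' [M [lenM coverM]]]; first by exists nil; split.
  have [F [lenF hF]] := fibres y.
  exists (F ++ M); split; first by rewrite length_app /=; lia.
  by move=> x /= [hx|hx]; apply/in_or_app; [left; apply: hF|right; apply: coverM].
apply: Nat.le_trans lenM; apply: NoDup_incl_length ndL _ => x hx.
by apply: coverM; apply: img.
Qed.

Definition tmap {G H : Group} (f : G -> H) {n : nat} (T : tuple_of G n)
  : tuple_of H n := fun i => f (T i).

Section Homomorphism.

Context {G H : Group} {f : G -> H} (hom_f : is_hom f).

Lemma hom_gone : f gone = gone.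
Proof.
have e : f gone = gmul (f gone) (f gone) by rewrite -hom_f gmul1l.
have := gmulVl (f gone).
by rewrite {2}e gmulA gmulVl gmul1l.
Qed.

Lemma hom_ginv (x : G) : f (ginv x) = ginv (f x).
Proof.
have e : gmul (f (ginv x)) (f x) = gone by rewrite -hom_f gmulVl hom_gone.
by rewrite -[f (ginv x)]gmul1r -(gmulVr (f x)) gmulA e gmul1l.
Qed.

Lemma tmap_upd n (T : tuple_of G n) (j : 'I_n) (x : G) :
  tmap f (upd T j x) = upd (tmap f T) j (f x).
Proof. by apply: functional_extensionality => k; rewrite /tmap /upd; case: (k == j). Qed.

Lemma nielsen_move_tmap n (T T' : tuple_of G n) :
  nielsen_move T T' -> nielsen_move (tmap f T) (tmap f T').
Proof.
move=> [i [j [e [neq_ij hmove]]]]; exists i, j, e; split => //=.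
by case: e hmove => /= [[]|[]] ->; rewrite tmap_upd hom_f ?hom_ginv; [left|right|left|right].
Qed.

Lemma tmap_fibre (l : list G) n (u : tuple_of H n) :
  (forall x, f x = gone -> In x l) ->
  exists F, (length F <= length l ^ n)%coq_nat /\ forall w, tmap f w = u -> In w F.
Proof.
move=> ker_l.
case: (classic (exists T, tmap f T = u)) => [[T <-]|nopre]; last first.
  by exists nil; split; [exact: Nat.le_0_l|move=> w hw; case: nopre; exists w].
exists (map (fun d i => gmul (T i) (d i)) (functions_into gone l (enum 'I_n))).
split; first by rewrite length_map length_functions_into size_enum_ord.
move=> w hw; apply/in_map_iff; exists (fun i => gmul (ginv (T i)) (w i)); split.
  by apply: functional_extensionality => i; rewrite gmulA gmulVr gmul1l.
apply: In_functions_into_ord => i; apply: ker_l.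
rewrite hom_f hom_ginv.
by have /= -> : f (w i) = f (T i) := f_equal (fun F => F i) hw; apply: gmulVl.
Qed.

Context (surj_f : forall y : H, exists x : G, f x = y).

Lemma generates_tmap n (T : tuple_of G n) : generates T -> generates (tmap f T).
Proof.
move=> genT P P1 Pmul Pinv PT y; case: (surj_f y) => x <-.
apply: (genT (fun x => P (f x))) => //.
- by rewrite hom_gone.
- by move=> a b Pa Pb; rewrite hom_f; apply: Pmul.
- by move=> a Pa; rewrite hom_ginv; apply: Pinv.
Qed.

Lemma within_tmap n r (v w : tuple_of G n) :
  within r v w -> within r (tmap f v) (tmap f w).
Proof.
elim=> [r0 v0|r0 v0 u w0 _ IH [genu [genw mv]]]; first exact: within_refl.
apply: within_step IH _; split; [|split].
- exact: generates_tmap.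
- exact: generates_tmap.
- exact: nielsen_move_tmap.
Qed.

Lemma exp_growth_from_tmap n (v : tuple_of G n) :
  finite_kernel f -> exp_growth_from v -> exp_growth_from (tmap f v).
Proof.
move=> [l ker_l] [alpha [alpha_gt1 [r0 growth]]].
have [r1 absorb] := pow_sqrt_absorbs_constant _ (length l ^ n) alpha_gt1.
exists (sqrt alpha); split; first by rewrite -sqrt_1; apply: sqrt_lt_1_alt; lra.
exists (Nat.max r0 r1) => r hr.
have [L [ndL [ballL sizeL]]] := growth r ltac:(lia).
set L' := nodup (fun x y => excluded_middle_informative (x = y)) (map (tmap f) L).
exists L'; split; first exact: NoDup_nodup.
split.
  by move=> w /nodup_In /in_map_iff [T [<- hT]]; apply: within_tmap; last exact: ballL.
apply: absorb; [lia|exact: pos_INR|]; apply: Rle_trans sizeL _.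
rewrite -mult_INR; apply: le_INR; apply: NoDup_length_le_fibres ndL _ _.
- by move=> T hT; apply/nodup_In/in_map; apply: hT.
- by move=> u; apply: tmap_fibre.
Qed.

End Homomorphism.

Theorem proposition3p6 (G H : Group) (f : G -> H) :
  finitely_generated G -> finitely_generated H ->
  is_hom f -> (forall y : H, exists x : G, f x = y) -> finite_kernel f ->
  (forall (n : nat) (S : tuple_of G n),
      generates S -> component_exp_growth S ->
      component_exp_growth (fun i => f (S i)))
  /\ (exp_nielsen_growth G -> exp_nielsen_growth H).
Proof.
move=> _ _ hom_f surj_f ker_f.
have growth_tmap n (S : tuple_of G n) :
    generates S -> component_exp_growth S -> component_exp_growth (tmap f S).
  move=> genS [v [[_ [r hr]] growth_v]].
  exists (tmap f v); split; last exact: exp_growth_from_tmap.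
  by split; [apply: generates_tmap|exists r; apply: within_tmap].
split; first exact: growth_tmap.
move=> [n [S [genS growthS]]]; exists n, (tmap f S).
by split; [apply: generates_tmap|apply: growth_tmap].
Qed.
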